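(* For $s,t\in\mu_r$ and $v,w\in\mathcal{A}_r$: \[ y\diamond_s vz_t^\delta w=(y\diamond_s v)z_t^\delta w+vz_t^\delta(y\diamond_s w)+vz_t^\delta(z_s^\delta-z_t^\delta)w. \]
   Context: Fix $r\ge1$, $\mu_r$ the $r$th roots of unity, $\mathcal{A}_r=\mathbb{Q}\langle x,y_s\mid s\in\mu_r\rangle$ the free noncommutative polynomial algebra over $\mathbb{Q}$, $\mathcal{A}_1=\mathbb{Q}\langle x,y\rangle$ with $y=y_1$. Write $z=x+y_1$, $z_s=x+y_s$, $\delta(1)=0$, $\delta(s)=1$ ($s\ne1$), $z_s^\delta=x+\delta(s)y_s$, $z_{k,s}=x^{k-1}y_s$. Let $\varphi$ be the algebra automorphism of $\mathcal{A}_r$ with $\varphi(x)=z$, $\varphi(y_s)=\delta(s)y_s-y_1$. Every word is uniquely $z_{k_1,s_1}\cdots z_{k_l,s_l}x^a$ ($l,a\ge0$); define linear maps $\mathcal{I}(z_{k_1,s_1}\cdots z_{k_l,s_l}x^a)=z_{k_1,s_1}z_{k_2,s_1s_2}\cdots z_{k_l,s_1\cdots s_l}x^a$ and $M_s(z_{k_1,s_1}\cdots z_{k_l,s_l}x^a)=z_{k_1,ss_1}z_{k_2,s_2}\cdots z_{k_l,s_l}x^a$ (with $M_s(x^a)=x^a$), and $\psi_s=\varphi\circ\mathcal{I}\circ M_s$. Diamond product: for $s\in\mu_r$, $\diamond_s:\mathcal{A}_1\times\mathcal{A}_r\to\mathcal{A}_r$ is the $\mathbb{Q}$-bilinear map defined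 recursively on words by $1\diamond_s w=w$, $v\diamond_s1=\psi_s\varphi(v)$, and for $v\in\mathcal{A}_1$, $w\in\mathcal{A}_r$, $1\ne t\in\mu_r$: $vx\diamond_s wx=(v\diamond_s wx)x-(vy\diamond_s w)x$; $vy\diamond_s wx=(v\diamond_s wx)y+(vy\diamond_s w)x$; $vx\diamond_s wy=(v\diamond_s wy)x+(vx\diamond_s w)y$; $vy\diamond_s wy=(v\diamond_s wy)y-(vx\diamond_s w)y$; $vx\diamond_s wy_t=(v\diamond_s wy_t)x+(v\diamond_s wz_t)y_t-(vy\diamond_s w)y_t$; $vy\diamond_s wy_t=(v\diamond_s wy_t)y-(v\diamond_s wz_t)y_t+(vy\diamond_s w)y_t$. *)

From HB Require Import structures.
From mathcomp Require Import all_boot all_order all_algebra.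
From mathcomp Require Import finmap.
From mathcomp Require Import monalg.
Set Implicit Arguments. Unset Strict Implicit. Unset Printing Implicit Defensive.
Import GRing.Theory.
Local Open Scope ring_scope.

(* letters of A_r, r = n.+1 : None = x, Some s = y_s; mu_r is encoded
   additively as 'I_n.+1 (exponent of a fixed primitive root), 1 <-> 0. *)
Notation letter n := (option 'I_n.+1).
Definition word (n : nat) := seq (letter n).
HB.instance Definition _ n := Choice.copy (word n) (seq (letter n)).
Lemma word_unit n (u v : word n) : u ++ v = [::] -> u = [::] /\ v = [::].
Proof. by case: u; case: v. Qed.
HB.instance Definition _ n := Choice_isMonomialDef.Build (word n) (one := [::] : word n) (mul := @cat _ : word n -> word n -> word n)
  (@catA _) (@cat0s _) (@cats0 _) (@word_unit n).


Definition A (n : nat) := {malg rat[word n]}.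

Definition wd n (u : word n) : A n := << (u : word n) >>.
Definition lin n m (h : word n -> A m) (p : A n) : A m :=
  \sum_(u <- msupp p) p@_u *: h u.
Definition bilin n m k (h : word n -> word m -> A k) (p : A n) (q : A m) : A k :=
  \sum_(u <- msupp p) \sum_(u' <- msupp q) (p@_u * q@_u') *: h u u'.

Definition X n : A n := wd [:: None].
Definition Y n (s : 'I_n.+1) : A n := wd [:: Some s].
Definition delta n (s : 'I_n.+1) : rat := (s != 0)%:R.
Definition zs n (s : 'I_n.+1) : A n := X n + Y s.
Definition zdelta n (s : 'I_n.+1) : A n := X n + delta s *: Y s.

Definition phiL n (l : letter n) : A n :=
  match l with None => X n + Y (0 : 'I_n.+1) | Some s => delta s *: Y s - Y (0 : 'I_n.+1) end.
Definition phi n (p : A n) : A n := lin (fun u : word n => \prod_(l <- u) phiL l) p.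

(* I : replaces y_{s_1} .. y_{s_l} by y_{s_1}, y_{s_1 s_2}, ..., y_{s_1...s_l} *)
Fixpoint Iacc n (acc : 'I_n.+1) (u : seq (letter n)) : seq (letter n) :=
  match u with
  | [::] => [::]
  | None :: u' => None :: Iacc acc u'
  | Some s :: u' => Some (acc + s) :: Iacc (acc + s) u'
  end.
Definition Iw n (u : word n) : word n := Iacc 0 u.
Fixpoint Mw n (s : 'I_n.+1) (u : seq (letter n)) : seq (letter n) :=
  match u with
  | [::] => [::]
  | None :: u' => None :: Mw s u'
  | Some t :: u' => Some (s + t) :: u'
  end.
Definition psi n (s : 'I_n.+1) (p : A n) : A n :=
  phi (lin (fun u : word n => wd (Iw (Mw s u) : word n)) p).

Definition embL n (l : letter 0) : letter n := if l is Some _ then Some 0 else None.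
Definition emb n (p : A 0) : A n := lin (fun u : word 0 => wd (map (@embL n) u : word n)) p.

(* diamond product on words; arguments are the REVERSED words (head = last
   letter), k is a fuel equal to the total length (each recursive call
   decreases total length by exactly one). *)
Fixpoint dia n (s : 'I_n.+1) (k : nat) (rv : seq (letter 0)) (rw : seq (letter n))
  : A n :=
  match rv with
  | [::] => wd (rev rw : word n)
  | a :: rv' =>
    match rw with
    | [::] => psi s (phi (emb n (wd (rev rv : word 0))))
    | b :: rw' =>
      match k with
      | 0 => 0
      | k'.+1 =>
        let y1 := Y (0 : 'I_n.+1) in
        match a, b with
        | None, None =>
            dia s k' rv' rw * X n - dia s k' (Some ord0 :: rv') rw' * X n
        | Some _, None =>
            dia s k' rv' rw * y1 + dia s k' rv rw' * X n
        | None, Some t =>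
            if t == 0 then
              dia s k' rv' rw * X n + dia s k' rv rw' * y1
            else
              dia s k' rv' rw * X n
              + (dia s k' rv' (None :: rw') + dia s k' rv' rw) * Y t
              - dia s k' (Some ord0 :: rv') rw' * Y t
        | Some _, Some t =>
            if t == 0 then
              dia s k' rv' rw * y1 - dia s k' (None :: rv') rw' * y1
            else
              dia s k' rv' rw * y1
              - (dia s k' rv' (None :: rw') + dia s k' rv' rw) * Y t
              + dia s k' rv rw' * Y t
        end
      end
    end
  end.

Definition dia_word n (s : 'I_n.+1) (v : word 0) (w : word n) : A n :=
  dia s (size v + size w) (rev v) (rev w).

Definition diamond n (s : 'I_n.+1) (v : A 0) (w : A n) : A n :=
  bilin (@dia_word n s) v w.

Definition y1 : A 0 := Y (0 : 'I_1).

From HB Require Import structures.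
From mathcomp Require Import all_boot all_order all_algebra.
From mathcomp Require Import finmap monalg.
Set Implicit Arguments.
Unset Strict Implicit.
Unset Printing Implicit Defensive.
Import GRing.Theory.
Local Open Scope fset_scope.
Local Open Scope ring_scope.

(* For fixed s, the map w |-> y <>_s w is w |-> (y_1 - delta(s) y_s) w + E(w),
   where E is the derivation of A_r with E(x) = x y_1 and
   E(y_t) = y_t y_1 - z_t y_t.  This is proved on words by induction from the
   recursive definition of <>_s, using (x + y) <>_s w = w z, which holds
   because the recursions for x <>_s w and y <>_s w cancel term by term.
   As E(z_t^delta) = z_t^delta (z - z_t^delta) and
   y_1 - delta(s) y_s + z_s^delta = z, the Leibniz rule for E gives the
   identity. *)

Lemma lmul_add_derivationM (R : ringType) (E : R -> R) (c z a v w : R) :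
    (forall p q, E (p * q) = E p * q + p * E q) -> E a = a * (c + z - a) ->
  c * (v * a * w) + E (v * a * w)
  = (c * v + E v) * a * w + v * a * (c * w + E w) + v * a * (z - a) * w.
Proof.
move=> EM Ea; rewrite !EM Ea -(addrA c) !(mulrDr, mulrDl) !mulrA !addrA.
by rewrite !(addrAC _ (v * a * E w)).
Qed.

Section WordAlgebra.
Variable n : nat.
Implicit Types (p q : A n) (u v : word n).

Lemma scalerAr_malg (c : rat) p q : p * (c *: q) = c *: (p * q).
Proof.
have malgC_central r : c%:MP * r = r * c%:MP.
  rewrite !malgM_def fgmulUg fgmulgU; apply: eq_bigr => k _.
  by rewrite mulrC mul1m mulm1.
by rewrite -!mul_malgC mulrA -malgC_central mulrA.
Qed.

Lemma wd_cat u v : wd (u ++ v) = wd u * wd v.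
Proof. by rewrite /wd malgM_def fgmulUU mulr1. Qed.

Lemma wd_cons l u : wd (l :: u) = wd [:: l] * wd u.
Proof. exact: (wd_cat [:: l] u). Qed.

Lemma wd_rcons u l : wd (rcons u l) = wd u * wd [:: l].
Proof. by rewrite -cats1 wd_cat. Qed.

Lemma monalgU_wd (c : rat) u : << c *g u >> = c *: wd u.
Proof. by rewrite -mul_malgC /wd malgM_def fgmulUU mulr1 mul1m. Qed.

Lemma wd_span_ind (P : A n -> Prop) :
  P 0 -> (forall c u p, P p -> P (c *: wd u + p)) -> forall p, P p.
Proof.
move=> P0 Pstep p; rewrite (monalgE p).
elim: (msupp p : seq _) => [|u r IH]; first by rewrite big_nil.
by rewrite big_cons monalgU_wd; apply: Pstep.
Qed.
End WordAlgebra.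

Section LinearExtension.
Variables n m : nat.
Variable h : word n -> A m.

Lemma linEw {d : {fset word n}} {p : A n} : msupp p `<=` d ->
  lin h p = \sum_(u <- d) p@_u *: h u.
Proof.
move=> le; rewrite /lin (big_fset_incl _ le) //= => u _ /mcoeff_outdom ->.
by rewrite scale0r.
Qed.

Lemma lin_is_linear : linear (lin h).
Proof.
move=> c p q.
have le_supp : msupp (c *: p + q) `<=` msupp p `|` msupp q.
  exact: fsubset_trans (msuppD_le _ _) (fsetSU _ (msuppZ_le c p)).
rewrite (linEw le_supp) (linEw (fsubsetUl _ (msupp q))).
rewrite (linEw (fsubsetUr (msupp p) _)) scaler_sumr -big_split.
by apply: eq_bigr => u _; rewrite mcoeffD mcoeffZ scalerDl scalerA.
Qed.

HB.instance Definition _ := GRing.isLinear.Build rat (A n) (A m) *:%R (lin h)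
  lin_is_linear.

Lemma linU (u : word n) : lin h (wd u) = h u.
Proof. by rewrite (linEw msuppU_le) big_seq_fset1 mcoeffUU scale1r. Qed.
End LinearExtension.

Lemma bilinU n m k (h : word n -> word m -> A k) (u : word n) (q : A m) :
  bilin h (wd u) q = lin (h u) q.
Proof.
rewrite /bilin /wd msuppU1 big_seq_fset1 /lin; apply: eq_bigr => u' _.
by rewrite mcoeffUU mul1r.
Qed.

Section Derivation.
Variable n : nat.
Implicit Types (p q : A n) (u v : word n).

Definition der_letter (l : letter n) : A n :=
  match l with None => X n * Y 0 | Some t => Y t * Y 0 - zs t * Y t end.

Fixpoint der_word (u : seq (letter n)) : A n :=
  match u with
  | [::] => 0
  | l :: u' => der_letter l * wd u' + wd [:: l] * der_word u'
  end.

Definition der : A n -> A n := lin der_word.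
HB.instance Definition _ := GRing.Linear.copy der (lin der_word).

Lemma der_wd u : der (wd u) = der_word u.
Proof. exact: linU. Qed.

Lemma der_word_cat u v : der_word (u ++ v) = der_word u * wd v + wd u * der_word v.
Proof.
elim: u => [|l u IH] /=; first by rewrite mul0r add0r mul1r.
rewrite IH wd_cat (wd_cons l u).
(* Generalizing the monomials keeps rewriting and [by] from unfolding the
   finitely supported functions behind them, which is very slow. *)
move: {IH} (der_letter l) (wd [:: l]) (wd u) (wd v) (der_word u) (der_word v).
by move=> dl wl wu wv du dv; rewrite mulrDr mulrDl !mulrA addrA.
Qed.

Lemma derM p q : der (p * q) = der p * q + p * der q.
Proof.
have der_wdM u r : der (wd u * r) = der_word u * r + wd u * der r.
  elim/wd_span_ind: r => [|c v r IH]; first by rewrite !mulr0 linear0 mulr0 addr0.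
  rewrite !mulrDr !scalerAr_malg -wd_cat !linearP /=.
  by rewrite !der_wd der_word_cat IH scalerDr mulrDr scalerAr_malg addrACA.
elim/wd_span_ind: p => [|c u p IH]; first by rewrite !mul0r linear0 mul0r addr0.
rewrite !mulrDl -!scalerAl !linearP /= der_wdM IH der_wd.
by rewrite scalerDr mulrDl -scalerAl addrACA.
Qed.

Lemma der_letter_wd l : der (wd [:: l]) = der_letter l.
Proof. by rewrite der_wd /= mulr0 addr0 mulr1. Qed.

Lemma der_zdelta t : der (zdelta t) = zdelta t * (zs 0 - zdelta t).
Proof.
rewrite /zdelta linearD linearZ /= !der_letter_wd /= /zs /delta.
case: (eqVneq t 0) => [->|_]; rewrite ?eqxx ?scale0r ?scale1r.
  by move: (X n) (Y 0) => x y0; rewrite !addr0 (addrC x) addrK.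
move: (X n) (Y 0) (Y t) => x y0 yt.
by rewrite (addrC x y0) addrKA mulrBr (mulrDl x yt y0) addrA.
Qed.
End Derivation.

Section DiamondWithY.
Variable n : nat.
Variable s : 'I_n.+1.
Implicit Types (rw : seq (letter n)) (p : A n).

Definition diamond_y_one : A n := Y 0 - delta s *: Y s.

Lemma diamond_y_one_add_zdelta : diamond_y_one + zdelta s = zs 0.
Proof. by rewrite /diamond_y_one /zdelta /zs addrCA subrK addrC. Qed.

(* [dia] reads words reversed and carries a fuel equal to the total length:
   [dia_x rw] and [dia_y rw] are x <>_s w and y <>_s w for w = rev rw. *)
Local Notation W rw := (wd (rev rw : word n)).
Local Notation dia_x rw := (dia s (size (rw : seq (letter n))).+1 [:: None] rw).
Local Notation dia_y rw := (dia s (size (rw : seq (letter n))).+1 [:: Some 0] rw).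

Lemma dia_y_nil : dia_y [::] = diamond_y_one.
Proof.
rewrite /= /emb linU /= /phi linU /= big_seq1 /= /delta eqxx scale0r sub0r.
rewrite /psi linearN /= linU /= /phi linearN /= linU /= big_seq1 /=.
by rewrite add0r addr0 opprB.
Qed.

Lemma dia_x_nil : dia_x [::] = zdelta s.
Proof.
rewrite /= /emb linU /= /phi linU /= big_seq1 /=.
rewrite /psi linearD /= !linU /= /phi linearD /= !linU /= !big_seq1 /=.
rewrite add0r addr0 /zdelta.
by move: (X n) (Y 0) (delta s *: Y s) => x y0 ys; rewrite -addrA (addrC y0) subrK.
Qed.

Lemma W_cons l rw : W (l :: rw) = W rw * wd [:: l].
Proof. by rewrite rev_cons wd_rcons. Qed.

Lemma dia_nil k rw : dia s k [::] rw = W rw.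
Proof. by case: k. Qed.

Lemma dia_x_cons_x rw : dia_x (None :: rw) = W rw * X n * X n - dia_y rw * X n.
Proof. by rewrite /= dia_nil W_cons. Qed.

Lemma dia_y_cons_x rw : dia_y (None :: rw) = W rw * X n * Y 0 + dia_y rw * X n.
Proof. by rewrite /= dia_nil W_cons. Qed.

Lemma dia_x_cons_y1 rw : dia_x (Some 0 :: rw) = W rw * Y 0 * X n + dia_x rw * Y 0.
Proof. by rewrite /= dia_nil W_cons. Qed.

Lemma dia_y_cons_y1 rw : dia_y (Some 0 :: rw) = W rw * Y 0 * Y 0 - dia_x rw * Y 0.
Proof. by rewrite /= dia_nil W_cons. Qed.

Lemma dia_x_cons_yt rw t : t != 0 ->
  dia_x (Some t :: rw) =
  W rw * Y t * X n + (W rw * X n + W rw * Y t) * Y t - dia_y rw * Y t.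
Proof. by move=> /negPf /= ->; rewrite !dia_nil !W_cons. Qed.

Lemma dia_y_cons_yt rw t : t != 0 ->
  dia_y (Some t :: rw) =
  W rw * Y t * Y 0 - (W rw * X n + W rw * Y t) * Y t + dia_y rw * Y t.
Proof. by move=> /negPf /= ->; rewrite !dia_nil !W_cons. Qed.

Lemma dia_x_add_y rw : dia_x rw + dia_y rw = W rw * zs 0.
Proof.
case: rw => [|l rw].
  by rewrite dia_x_nil dia_y_nil addrC diamond_y_one_add_zdelta mul1r.
rewrite W_cons /zs; case: l => [t|].
  case: (eqVneq t 0) => [->|tn0].
    rewrite dia_x_cons_y1 dia_y_cons_y1 -[wd [:: Some 0]]/(Y 0).
    move: (W rw) (dia_x rw) (X n) (Y 0) => w d x y0.
    by rewrite addrACA subrr addr0 -mulrDr.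
  rewrite (dia_x_cons_yt _ tn0) (dia_y_cons_yt _ tn0) -[wd [:: Some t]]/(Y t).
  move: (W rw) (dia_y rw) (X n) (Y 0) (Y t) => w d x y0 yt.
  by rewrite addrACA addNr addr0 addrACA subrr addr0 -mulrDr.
rewrite dia_x_cons_x dia_y_cons_x -[wd [:: None]]/(X n).
move: (W rw) (dia_y rw) (X n) (Y 0) => w d x y0.
by rewrite addrACA addNr addr0 -mulrDr.
Qed.

Lemma dia_xE rw : dia_x rw = W rw * zs 0 - dia_y rw.
Proof. by rewrite -dia_x_add_y addrK. Qed.

Lemma dia_y_cons l rw : dia_y (l :: rw) = dia_y rw * wd [:: l] + W rw * der_letter l.
Proof.
rewrite /der_letter; case: l => [t|].
  case: (eqVneq t 0) => [->|tn0].
    rewrite dia_y_cons_y1 dia_xE -[wd [:: Some 0]]/(Y 0).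
    move: (W rw) (dia_y rw) (Y 0) (zs 0) => w d y0 z.
    by rewrite mulrBl opprB addrCA mulrBr !mulrA.
  rewrite (dia_y_cons_yt _ tn0) /zs -[wd [:: Some t]]/(Y t).
  move: (W rw) (dia_y rw) (X n) (Y 0) (Y t) => w d x y0 yt.
  by rewrite addrC mulrBr !mulrA mulrDr.
rewrite dia_y_cons_x -[wd [:: None]]/(X n).
by move: (W rw) (dia_y rw) (X n) (Y 0) => w d x y0; rewrite addrC mulrA.
Qed.

Lemma dia_y_closed rw : dia_y rw = diamond_y_one * W rw + der (W rw).
Proof.
elim: rw => [|l rw IH].
  have W_nil : W [::] = 1 by [].
  by rewrite dia_y_nil der_wd W_nil mulr1 addr0.
by rewrite dia_y_cons IH W_cons derM der_letter_wd mulrDl mulrA addrA.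
Qed.

Lemma diamond_y1 p : diamond s y1 p = diamond_y_one * p + der p.
Proof.
rewrite /diamond /y1 /Y bilinU.
elim/wd_span_ind: p => [|c u p IH]; first by rewrite !linear0 mulr0 addr0.
rewrite !linearP /= IH linU mulrDr scalerAr_malg addrACA -scalerDr.
have -> : dia_word s [:: Some 0] u = dia_y (rev u) by rewrite /dia_word size_rev.
by rewrite dia_y_closed revK.
Qed.
End DiamondWithY.

Theorem mainTheorem11 (n : nat) (s t : 'I_n.+1) (v w : A n) :
  diamond s y1 (v * zdelta t * w)
  = diamond s y1 v * zdelta t * w
    + v * zdelta t * diamond s y1 w
    + v * zdelta t * (zdelta s - zdelta t) * w.
Proof.
rewrite !diamond_y1; apply: lmul_add_derivationM; first exact: derM.
by rewrite der_zdelta diamond_y_one_add_zdelta.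
Qed.
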